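(* Let $(V,E)$ be a finite graph with $E\ne\emptyset$ and $p\in(0,1)$. Let $(\eta_t,\sigma_t)_{t\ge0}$ be a continuous-time Markov jump process on $\{0,1\}^E\times\{-1,1\}^V$ with rates: if there exists $x\in V$ such that $\sigma'=\sigma^x$ and $\eta'(e)=\eta(e)$ for all $e\in E\setminus E_x$, then $c((\eta,\sigma),(\eta',\sigma'))=(1-p)^{|\{e\in E_x:\eta'(e)=0\}|}p^{|\{e\in E_x:\eta'(e)=1\}|}\mathbf 1_{(\eta',\sigma')\in\mathcal C_x}$; all other off-diagonal rates are $0$. Then $(\eta_t,\sigma_t)_{t\ge0}$ is reversible with respect to $IP$; its spin marginal $(\sigma_t)_{t\ge0}$ is a Markov jump process evolving according to the Glauber dynamics with rates $c(\sigma,\sigma^x)=(1-p)^{|\{e\in E_x:\delta_\sigma(e)=1\}|}$ for $x\in V$ (and rate $0$ for changes of two or more spins); and its edge marginal $(\eta_t)_{t\ge0}$ is not a Markov jump process.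
   Context: Edge configurations $\eta\in\{0,1\}^E$, spin configurations $\sigma\in\{-1,1\}^V$. For $e=\langle x,y\rangle$, $\delta_\sigma(e)=\mathbf 1_{\sigma(x)=\sigma(y)}$. $IP(\eta,\sigma)=\frac1Z\prod_{e\in E}\big(p\mathbf 1_{\eta(e)=1}\delta_\sigma(e)+(1-p)\mathbf 1_{\eta(e)=0}\big)$ with $Z$ the normalizing constant. $E_x$ is the set of edges with endvertex $x$; $\sigma^x$ is $\sigma$ with the spin at $x$ flipped. $\mathcal C_x=\{(\eta,\sigma):\eta(e)\le\delta_\sigma(e)\text{ for all }e\in E_x\}$. Reversibility w.r.t. $IP$ means $IP(a)c(a,b)=IP(b)c(b,a)$ for all states $a,b$. A marginal process is a Markov jump process if it is a time-homogeneous Markov process for every initial distribution, with transition rates not depending on the initial distribution. *)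

From HB Require Import structures.
From mathcomp Require Import all_boot all_order all_algebra.
From mathcomp Require Import all_classical all_reals all_analysis.
Set Implicit Arguments. Unset Strict Implicit. Unset Printing Implicit Defensive.
Import Order.TTheory GRing.Theory Num.Theory.
Local Open Scope ring_scope.

Definition is_edge (V : finType) (adj : rel V) (A : {set V}) : bool :=
  [exists x, exists y, adj x y && (A == [set x; y])].

Definition edge (V : finType) (adj : rel V) := {A : {set V} | is_edge adj A}.

(* edge configurations eta in {0,1}^E (true = 1),
   spin configurations sigma in {-1,1}^V (true = +1, false = -1) *)
Definition ecfg (V : finType) (adj : rel V) := {ffun edge adj -> bool}.
Definition scfg (V : finType) := {ffun V -> bool}.
Definition state (V : finType) (adj : rel V) := (ecfg adj * scfg V)%type.

Section Model.
Variables (R : realType) (V : finType) (adj : rel V) (p : R).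

Definition delta (s : scfg V) (e : edge adj) : bool :=
  [forall x in val e, forall y in val e, s x == s y].

Definition inEx (x : V) (e : edge adj) : bool := x \in val e.

Definition flip (s : scfg V) (x : V) : scfg V :=
  [ffun y => if y == x then ~~ s y else s y].

Definition inC (x : V) (a : state adj) : bool :=
  [forall e, inEx x e ==> (a.1 e ==> delta a.2 e)].

Definition jump_at (x : V) (a b : state adj) : bool :=
  (b.2 == flip a.2 x) && [forall e, ~~ inEx x e ==> (b.1 e == a.1 e)].

Definition jump_weight (x : V) (b : state adj) : R :=
  (1 - p) ^+ #|[set e | inEx x e & ~~ b.1 e]|
  * p ^+ #|[set e | inEx x e & b.1 e]| * (inC x b)%:R.

(* joint rates c((eta,sigma),(eta',sigma')) (the x, if any, is unique) *)
Definition joint_rate (a b : state adj) : R :=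
  match [pick x | jump_at x a b] with
  | Some x => jump_weight x b
  | None => 0
  end.

Definition glauber_rate (s t : scfg V) : R :=
  match [pick x | t == flip s x] with
  | Some x => (1 - p) ^+ #|[set e | inEx x e & delta s e]|
  | None => 0
  end.

Definition IPweight (a : state adj) : R :=
  \prod_(e : edge adj)
     (if a.1 e then p * (delta a.2 e)%:R else 1 - p).
Definition IPZ : R := \sum_(a : state adj) IPweight a.
Definition IP (a : state adj) : R := IPweight a / IPZ.
End Model.

Section MJP.
Variable R : realType.

Definition rates (S : finType) (c : S -> S -> R) : Prop :=
  forall a b, a != b -> 0 <= c a b.

Definition gen (S : finType) (c : S -> S -> R) (a b : S) : R :=
  if a == b then - \sum_(b' | b' != a) c a b' else c a b.

Fixpoint mpow (S : finType) (Q : S -> S -> R) (k : nat) (a b : S) : R :=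
  match k with
  | 0 => (a == b)%:R
  | k.+1 => \sum_(m : S) mpow Q k a m * Q m b
  end.

Definition semigroup (S : finType) (Q : S -> S -> R) (t : R) (a b : S) : R :=
  limn (fun n => \sum_(k < n) (t ^+ k / (k`!)%:R * mpow Q k a b)).

Definition reversible (S : finType) (pi : S -> R) (c : S -> S -> R) : Prop :=
  forall a b, pi a * c a b = pi b * c b a.

Definition is_distr (S : finType) (mu : S -> R) : Prop :=
  (forall a, 0 <= mu a) /\ \sum_a mu a = 1.

Definition pushforward (S T : finType) (f : S -> T) (mu : S -> R) (b : T) : R :=
  \sum_(a | f a == b) mu a.

Fixpoint fdd_go (S T : finType) (c : S -> S -> R) (f : S -> T) (a : S)
    (steps : seq (R * T)) : R :=
  match steps with
  | [::] => 1
  | (dt, b) :: st =>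
      \sum_(a' : S) semigroup (gen c) dt a a' * (f a' == b)%:R * fdd_go c f a' st
  end.

(* finite-dimensional distributions of (f(X_t))_t, where X is the Markov
   jump process with rates c and initial distribution mu: the probability
   that f(X_{t_i}) = b_i for t_i = dt_1 + ... + dt_i *)
Definition fdd (S T : finType) (c : S -> S -> R) (f : S -> T) (mu : S -> R)
    (steps : seq (R * T)) : R :=
  \sum_(a : S) mu a * fdd_go c f a steps.

Definition MJP_marginal (S T : finType) (c : S -> S -> R) (f : S -> T)
    (c' : T -> T -> R) : Prop :=
  forall mu : S -> R, is_distr mu ->
  forall steps : seq (R * T), all (fun st => 0 <= st.1) steps ->
    fdd c f mu steps = fdd c' id (pushforward f mu) steps.

Definition is_MJP (S T : finType) (c : S -> S -> R) (f : S -> T) : Prop :=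
  exists c' : T -> T -> R, rates c' /\ MJP_marginal c f c'.
End MJP.

(* Reversibility is detailed balance: IP(eta, sigma) is the product of the
   edge weights off the star E_x times the weight of the star, and a jump at x
   keeps everything off E_x and resamples the star with exactly its IP weight.
   Summing the joint rates over the new edge states factorizes over E_x and
   gives the Glauber rate, so the spin marginal is a lumping of the joint chain.
   The edge marginal is not Markov: start from all edges closed and all spins
   equal, or from the same edges with one endpoint x of an edge e flipped.  The
   edge marginal starts at the same point, but d/dt P(eta_t = 1_e) at t = 0 is
   0 in the first case (a flip that opens e makes it disagree) and positive in
   the second (flip x back and open e); a Markov edge process would have the
   same derivative from both starts, since P_t = I + tQ + O(t^2). *)

From Pilot Require Import Defs.
From HB Require Import structures.
From mathcomp Require Import all_boot all_order all_algebra.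
From mathcomp Require Import all_classical all_reals all_analysis.
From mathcomp Require Import ring.
Import Order.TTheory GRing.Theory Num.Theory numFieldNormedType.Exports.
Local Open Scope ring_scope.

Lemma sum_indicator {R : pzSemiRingType} (I : finType) (P : pred I) (a : I) :
  \sum_(b | P b) (a == b)%:R = (P a)%:R :> R.
Proof.
have [Pa|nPa] := boolP (P a).
  by rewrite (bigD1 a) //= eqxx big1 ?addr0 // => b /andP[_]; rewrite eq_sym => /negbTE ->.
by rewrite big1 // => b Pb; case: eqP => // ab; rewrite ab Pb in nPa.
Qed.

Lemma sum_indicator_mulr {R : pzSemiRingType} (I : finType) (P : pred I) (a : I)
    (F : I -> R) :
  \sum_(b | P b) (a == b)%:R * F b = (P a)%:R * F a.
Proof.
rewrite (eq_bigr (fun b => (a == b)%:R * F a)) => [|b _].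
  by rewrite -mulr_suml sum_indicator.
by case: eqP => [->|]; rewrite ?mul0r.
Qed.

Lemma prod_indicator {R : comPzSemiRingType} (I : finType) (P B : pred I) :
  \prod_(i | P i) (B i)%:R = [forall i, P i ==> B i]%:R :> R.
Proof.
have [/forallP PB|] := boolP [forall i, P i ==> B i].
  by rewrite big1 // => i Pi; rewrite (implyP (PB i) Pi).
rewrite negb_forall => /existsP[i]; rewrite negb_imply => /andP[Pi /negbTE nBi].
by rewrite (bigD1 i) //= nBi mul0r.
Qed.

Lemma limn_sum {R : realType} (I : finType) (P : pred I) (u : I -> R ^nat) :
  (forall i, cvgn (u i)) ->
  limn (fun n => \sum_(i | P i) u i n) = \sum_(i | P i) limn (u i).
Proof.
move=> cu; apply: cvg_lim => //; apply: cvg_big => [|i _]; first exact: add_continuous.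
exact: cu.
Qed.

Section ExponentialSeries.
Context {R : realType}.
Local Open Scope classical_set_scope.
Implicit Types (u : R ^nat) (t M : R).

Lemma series_shiftS_cvg u : cvgn (series (fun k => u k.+1)) ->
  series u @ \oo --> u 0%N + limn (series (fun k => u k.+1)).
Proof.
move=> cv; rewrite -cvg_shiftS.
have -> : [sequence series u n.+1]_n = fun n => u 0%N + series (fun k => u k.+1) n.
  by apply/funext => n; rewrite /= !seriesEord /= big_ord_recl.
exact: cvgD (cvg_cst _) cv.
Qed.

Definition exp_series t u := series (fun k => t ^+ k / k`!%:R * u k).

Lemma exp_series_term_le t M u k : 0 <= t -> (forall k, `|u k| <= M ^+ k) ->
  `|t ^+ k / k`!%:R * u k| <= exp_coeff (t * M) k.
Proof.
move=> t0 hu; rewrite exp_coeffE normrM ger0_norm ?divr_ge0 ?exprn_ge0 //.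
by rewrite /= exprMn mulrA [_^-1 * _]mulrC ler_wpM2l ?divr_ge0 ?exprn_ge0.
Qed.

Lemma cvg_exp_series t M u : 0 <= t -> (forall k, `|u k| <= M ^+ k) ->
  cvgn (exp_series t u).
Proof.
move=> t0 hu; have M0 : 0 <= M by rewrite -[M]expr1 (le_trans _ (hu 1%N)).
apply: normed_cvg; apply: (series_le_cvg _ _ _ (is_cvg_series_exp_coeff (t * M))).
- by move=> k; rewrite /= normr_ge0.
- by move=> k; rewrite exp_coeff_ge0 // mulr_ge0.
- by move=> k; apply: exp_series_term_le.
Qed.

Lemma exp_series_remainder t M u : 0 <= t <= 1 -> (forall k, `|u k| <= M ^+ k) ->
  `|limn (exp_series t u) - u 0%N - t * u 1%N| <= (t * M) ^+ 2 * expR M.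
Proof.
move=> /andP[t0 t1] hu; have M0 : 0 <= M by rewrite -[M]expr1 (le_trans _ (hu 1%N)).
set a := fun k => t ^+ k / k`!%:R * u k.
set K := (t * M) ^+ 2.
have r_le k : `|a k.+2| <= (K *: exp_coeff M) k.
  have fact_le : ((k.+2)`!%:R)^-1 <= (k`!%:R : R)^-1.
    by rewrite lef_pV2 ?posrE ?ltr0n ?fact_gt0 // ler_nat; apply/leq_fact/leqW.
  have tk : t ^+ k <= 1 by rewrite exprn_ile1.
  rewrite /a /= normrM ger0_norm ?divr_ge0 ?exprn_ge0 //.
  apply: (le_trans (ler_wpM2l _ (hu _))); first by rewrite divr_ge0 ?exprn_ge0.
  have -> : t ^+ k.+2 / (k.+2)`!%:R * M ^+ k.+2
            = (t ^+ k * ((k.+2)`!%:R)^-1) * (K * M ^+ k) by rewrite /K !exprSr; ring.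
  have -> : (K *: exp_coeff M) k = (1 * (k`!%:R)^-1) * (K * M ^+ k).
    by rewrite scalrfctE exp_coeffE /= -[_ *: _]/(_ * _); ring.
  by rewrite ler_wpM2r ?mulr_ge0 ?exprn_ge0 // ler_pM ?exprn_ge0 ?invr_ge0.
have cK : cvgn (series (K *: exp_coeff M)).
  exact: is_cvg_seriesZ (is_cvg_series_exp_coeff M).
have cnr : cvgn [normed series (fun k => a k.+2)].
  apply: (series_le_cvg _ _ _ cK) => // k.
  - by rewrite /= normr_ge0.
  - by rewrite scalrfctE mulr_ge0 ?exp_coeff_ge0 // exprn_ge0 // mulr_ge0.
have c1 := @series_shiftS_cvg (fun k => a k.+1) (normed_cvg cnr).
have c0 := @series_shiftS_cvg a (cvgP _ c1).
rewrite /exp_series -/a (cvg_lim _ c0) // (cvg_lim _ c1) //.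
have -> : a 0%N + (a 1%N + limn (series (fun k => a k.+2))) - u 0%N - t * u 1%N
          = limn (series (fun k => a k.+2)).
  by rewrite /a /= expr0 expr1 factS fact0 !divr1 mul1r; ring.
apply: (le_trans (lim_series_norm cnr)); apply: (le_trans (lim_series_le cnr cK r_le)).
by rewrite lim_seriesZ //; exact: is_cvg_series_exp_coeff.
Qed.
End ExponentialSeries.

Lemma eq0_of_norm_le_linear (R : realFieldType) (d C : R) :
  (forall t, 0 < t <= 1 -> `|d| <= C * t) -> d = 0.
Proof.
move=> hd; apply/normr0_eq0/le_anti; rewrite normr_ge0 andbT.
apply/ler_addgt0Pr => e e0; rewrite add0r.
have C1 : 0 < `|C| + 1 by rewrite ltr_wpDl.
pose t := Order.min 1 (e / (`|C| + 1)).
have t0 : 0 < t by rewrite lt_min ltr01 divr_gt0.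
have t1 : t <= 1 by rewrite ge_min lexx.
have te : t * (`|C| + 1) <= e by rewrite -ler_pdivlMr // ge_min lexx orbT.
apply: (le_trans (hd t _)); first by rewrite t0 t1.
apply: le_trans te; rewrite mulrC ler_wpM2l ?(ltW t0) //.
by rewrite (le_trans (real_ler_norm (num_real C))) // lerDl.
Qed.

Section Semigroup.
Context {R : realType} {S : finType}.
Implicit Types (Q : S -> S -> R) (h : S -> R).

Definition l1norm Q : R := \sum_a \sum_b `|Q a b|.

Lemma l1norm_ge0 Q : 0 <= l1norm Q.
Proof. by apply: sumr_ge0 => a _; apply: sumr_ge0. Qed.

Lemma mpow1 Q a b : mpow Q 1 a b = Q a b.
Proof.
rewrite /= (bigD1 a) //= eqxx mul1r big1 ?addr0 // => m /negbTE.
by rewrite eq_sym => ->; rewrite mul0r.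
Qed.

Lemma mpow_norm_le Q k a b : `|mpow Q k a b| <= l1norm Q ^+ k.
Proof.
elim: k b => [|k IH] b /=; first by case: (a == b); rewrite ?normr1 ?normr0.
apply: (le_trans (ler_norm_sum _ _ _)).
apply: (@le_trans _ _ (\sum_m l1norm Q ^+ k * `|Q m b|)).
  by apply: ler_sum => m _; rewrite normrM ler_wpM2r.
rewrite -mulr_sumr exprSr ler_wpM2l ?exprn_ge0 ?l1norm_ge0 // /l1norm exchange_big.
by rewrite [leRHS](bigD1 b) //= lerDl sumr_ge0 // => i _; apply: sumr_ge0.
Qed.

Lemma semigroupE Q t a b :
  semigroup Q t a b = limn (exp_series t (fun k => mpow Q k a b)).
Proof. by rewrite /semigroup /exp_series seriesEord. Qed.

Lemma cvg_semigroup Q t a b : 0 <= t ->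
  cvgn (exp_series t (fun k => mpow Q k a b)).
Proof. by move=> t0; exact: (cvg_exp_series _ _ _ t0 (fun k => mpow_norm_le Q k a b)). Qed.

Lemma semigroup_first_order Q t a b : 0 <= t <= 1 ->
  `|semigroup Q t a b - (a == b)%:R - t * Q a b|
    <= (t * l1norm Q) ^+ 2 * expR (l1norm Q).
Proof.
move=> t01; rewrite semigroupE -(mpow1 Q a b).
exact: (exp_series_remainder _ _ (fun k => mpow Q k a b) t01 (fun k => mpow_norm_le Q k a b)).
Qed.

Lemma semigroup_mean_first_order Q h a t : (forall b, `|h b| <= 1) -> 0 <= t <= 1 ->
  `|\sum_b semigroup Q t a b * h b - h a - t * \sum_b Q a b * h b|
    <= #|S|%:R * ((t * l1norm Q) ^+ 2 * expR (l1norm Q)).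
Proof.
move=> h1 t01.
rewrite -[h a]mul1r -[1]/((predT a)%:R : R) -sum_indicator_mulr.
rewrite mulr_sumr -!sumrB; apply: (le_trans (ler_norm_sum _ _ _)).
rewrite -sum1_card natr_sum mulr_suml; apply: ler_sum => b _; rewrite mul1r.
rewrite mulrA -!mulrBl normrM -[leRHS]mulr1.
by apply: ler_pM => //; exact: semigroup_first_order.
Qed.

(* Differentiate at [t = 0], using [P_t = I + t Q + O(t^2)] entrywise. *)
Lemma gen_mean_eq_of_semigroup Q h a1 a2 :
  (forall b, `|h b| <= 1) -> h a1 = h a2 ->
  (forall t, 0 < t -> \sum_b semigroup Q t a1 b * h b = \sum_b semigroup Q t a2 b * h b) ->
  \sum_b Q a1 b * h b = \sum_b Q a2 b * h b.
Proof.
move=> h1 h12 semigroup_eq; apply/eqP; rewrite -subr_eq0; apply/eqP.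
set K := #|S|%:R * (l1norm Q ^+ 2 * expR (l1norm Q)).
apply: (@eq0_of_norm_le_linear _ _ (2 * K)) => t /andP[t0 t1].
have t01 : 0 <= t <= 1 by rewrite ltW.
have b1 := semigroup_mean_first_order Q h a1 t h1 t01.
have b2 := semigroup_mean_first_order Q h a2 t h1 t01.
rewrite semigroup_eq // h12 in b1.
set g := \sum_b semigroup Q t a2 b * h b in b1 b2.
have eK : #|S|%:R * ((t * l1norm Q) ^+ 2 * expR (l1norm Q)) = t * (K * t).
  by rewrite /K; ring.
rewrite eK in b1 b2.
rewrite -(ler_pM2l t0) -{1}(gtr0_norm t0) -normrM.
have -> : t * (\sum_b Q a1 b * h b - \sum_b Q a2 b * h b)
          = (g - h a2 - t * \sum_b Q a2 b * h b) - (g - h a2 - t * \sum_b Q a1 b * h b).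
  by ring.
apply: (le_trans (ler_normB _ _)).
have -> : t * (2 * K * t) = t * (K * t) + t * (K * t) by ring.
exact: lerD.
Qed.
End Semigroup.

Section Generator.
Context {R : realType} {S : finType} (c : S -> S -> R).

Lemma sum_gen a : \sum_b gen c a b = 0.
Proof.
rewrite (bigD1 a) //= /gen eqxx.
under eq_bigr => b ba do rewrite eq_sym (negbTE ba).
exact: addNr.
Qed.

Lemma sum_gen_notin (P : pred S) a :
  ~~ P a -> \sum_(b | P b) gen c a b = \sum_(b | P b) c a b.
Proof.
move=> nPa; apply: eq_bigr => b Pb; rewrite /gen.
by case: eqP => // ab; rewrite ab Pb in nPa.
Qed.
End Generator.

Section Lumping.
Context {R : realType} {S T : finType} (c : S -> S -> R) (f : S -> T) (c' : T -> T -> R).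
Hypothesis lumpable : forall a t, t != f a -> \sum_(b | f b == t) c a b = c' (f a) t.

Lemma sum_fiber_gen a t : \sum_(b | f b == t) gen c a b = gen c' (f a) t.
Proof.
have [->|ht] := eqVneq t (f a); last first.
  have hta : f a != t by rewrite eq_sym.
  by rewrite sum_gen_notin // lumpable // /gen (negbTE hta).
have := sum_gen c a; rewrite (partition_big f predT) //= (bigD1 (f a)) //=.
move/eqP; rewrite addr_eq0 => /eqP ->; rewrite /gen eqxx; congr (- _).
by apply: eq_bigr => t' ht'; rewrite sum_gen_notin ?lumpable // eq_sym.
Qed.

Lemma sum_fiber_mpow k a t :
  \sum_(b | f b == t) mpow (gen c) k a b = mpow (gen c') k (f a) t.
Proof.
elim: k a t => [|k IH] a t /=; first exact: sum_indicator.
rewrite exchange_big /=; under eq_bigr do rewrite -mulr_sumr sum_fiber_gen.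
rewrite (partition_big f predT) //=; apply: eq_bigr => t' _.
by rewrite -IH mulr_suml; apply: eq_bigr => b /eqP ->.
Qed.

Lemma sum_fiber_semigroup s a t : 0 <= s ->
  \sum_(b | f b == t) semigroup (gen c) s a b = semigroup (gen c') s (f a) t.
Proof.
move=> s0; under eq_bigr do rewrite semigroupE.
rewrite semigroupE -limn_sum => [|b]; last exact: cvg_semigroup.
congr (limn _); apply/funext => n; rewrite /exp_series /series /= exchange_big /=.
by apply: eq_bigr => k _; rewrite -mulr_sumr sum_fiber_mpow.
Qed.

Lemma fdd_go_lump a steps : all (fun st => 0 <= st.1) steps ->
  fdd_go c f a steps = fdd_go c' id (f a) steps.
Proof.
elim: steps a => [//|[dt b] steps IH] a /= /andP[dt0 hsteps].
rewrite [RHS](bigD1 b) //= eqxx mulr1 [X in _ = _ + X]big1 ?addr0; last first.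
  by move=> t tb; rewrite (negbTE tb) mulr0 mul0r.
rewrite -sum_fiber_semigroup // mulr_suml [RHS]big_mkcond /=.
apply: eq_bigr => a' _; case: eqP => [<-|_]; last by rewrite mulr0 mul0r.
by rewrite mulr1 IH.
Qed.

Lemma lumpable_MJP_marginal : MJP_marginal c f c'.
Proof.
move=> mu _ steps hsteps; rewrite /fdd /Defs.pushforward (partition_big f predT) //=.
apply: eq_bigr => t _; rewrite mulr_suml; apply: eq_bigr => a /eqP <-.
by rewrite fdd_go_lump.
Qed.
End Lumping.

Section MarginalGenerator.
Context {R : realType} {S T : finType} {c : S -> S -> R} {f : S -> T}.

Definition point_distr (a0 : S) (a : S) : R := (a0 == a)%:R.

Lemma point_distr_is_distr a0 : is_distr (point_distr a0).
Proof. by split=> [a|]; rewrite /point_distr ?ler0n ?sum_indicator. Qed.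

Lemma sum_fiber_mean (Q : S -> S -> R) a0 b :
  \sum_(a | f a == b) Q a0 a = \sum_a Q a0 a * (f a == b)%:R.
Proof.
by rewrite big_mkcond; apply: eq_bigr => a _; case: (f a == b); rewrite ?mulr1 ?mulr0.
Qed.

Lemma fdd_point_single a0 t b :
  fdd c f (point_distr a0) [:: (t, b)] = \sum_(a | f a == b) semigroup (gen c) t a0 a.
Proof.
rewrite /fdd /= sum_indicator_mulr mul1r sum_fiber_mean.
by apply: eq_bigr => a _; rewrite mulr1.
Qed.

Lemma MJP_marginal_gen_fiber {c'} a1 a2 b : MJP_marginal c f c' -> f a1 = f a2 ->
  \sum_(a | f a == b) gen c a1 a = \sum_(a | f a == b) gen c a2 a.
Proof.
move=> marg f12; rewrite !sum_fiber_mean; apply: gen_mean_eq_of_semigroup.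
- by move=> a; case: (f a == b); rewrite ?normr1 ?normr0.
- by rewrite f12.
move=> t t0; rewrite -!sum_fiber_mean -!fdd_point_single.
have step_ge0 : all (fun st => 0 <= st.1) [:: (t, b)] by rewrite /= ltW.
rewrite !(marg _ (point_distr_is_distr _) _ step_ge0); congr (fdd _ _ _ _).
by apply/funext => t'; rewrite /Defs.pushforward /point_distr !sum_indicator f12.
Qed.
End MarginalGenerator.

Section Model.
Context {R : realType} {V : finType} (adj : rel V) (p : R).
Hypothesis adj_irr : irreflexive adj.
Local Notation state := (state adj).

Lemma edgeP (e : edge adj) : exists u v, u != v /\ val e = [set u; v].
Proof.
have /existsP[u /existsP[v /andP[huv /eqP he]]] := valP e.
by exists u, v; split => //; apply: contraTneq huv => ->; rewrite adj_irr.
Qed.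

Lemma delta_pair {e : edge adj} {u v : V} :
  val e = [set u; v] -> forall s : scfg V, delta s e = (s u == s v).
Proof.
move=> he s; rewrite /delta he; apply/idP/idP.
  by move=> /forallP/(_ u); rewrite !inE eqxx /= => /forallP/(_ v); rewrite !inE eqxx orbT.
move=> /eqP suv; apply/forallP => x; apply/implyP; rewrite !inE => hx.
apply/forallP => y; apply/implyP; rewrite !inE => hy.
by case/orP: hx => /eqP ->; case/orP: hy => /eqP ->; rewrite ?suv.
Qed.

Lemma flipK (s : scfg V) x : flip (flip s x) x = s.
Proof. by apply/ffunP => y; rewrite !ffunE; case: eqP; rewrite ?negbK. Qed.

Lemma flip_inj (s : scfg V) : injective (flip s).
Proof.
move=> x y /ffunP/(_ x); rewrite !ffunE eqxx.
by case: eqVneq => // _; case: (s x).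
Qed.

Lemma delta_flip_notin (s : scfg V) x (e : edge adj) :
  ~~ inEx x e -> delta (flip s x) e = delta s e.
Proof.
have [u [v [_ he]]] := edgeP e.
rewrite /inEx he !inE negb_or => /andP[xu xv].
by rewrite !(delta_pair he) !ffunE ![_ == x]eq_sym (negbTE xu) (negbTE xv).
Qed.

Lemma delta_flip (s : scfg V) x (e : edge adj) :
  inEx x e -> delta (flip s x) e = ~~ delta s e.
Proof.
have [u [v [uv he]]] := edgeP e; have vu : v != u by rewrite eq_sym.
rewrite /inEx he !inE !(delta_pair he) !ffunE => /orP[]/eqP->;
  by rewrite eqxx ?(negbTE uv) ?(negbTE vu); case: (s u); case: (s v).
Qed.

Lemma jump_at_sym {x} {a b : state} : jump_at x a b -> jump_at x b a.
Proof.
move=> /andP[/eqP b2 /forallP off]; apply/andP; split; first by rewrite b2 flipK.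
by apply/forallP => e; apply/implyP => xe; rewrite eq_sym (implyP (off e) xe).
Qed.

Lemma joint_rate_jump {x} {a b : state} :
  jump_at x a b -> joint_rate p a b = jump_weight p x b.
Proof.
move=> jx; rewrite /joint_rate; case: pickP => [y jy|]; last by move/(_ x); rewrite jx.
by move: jx jy => /andP[/eqP bx _] /andP[/eqP]; rewrite bx => /flip_inj ->.
Qed.

Lemma joint_rate_nojump (a b : state) :
  (forall x, ~~ jump_at x a b) -> joint_rate p a b = 0.
Proof. by move=> nj; rewrite /joint_rate; case: pickP => // x; rewrite (negbTE (nj x)). Qed.

Definition edge_factor (a : state) (e : edge adj) : R :=
  if a.1 e then p * (delta a.2 e)%:R else 1 - p.

Lemma prod_star_edge_factor x (a : state) :
  \prod_(e | inEx x e) edge_factor a e = jump_weight p x a.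
Proof.
rewrite (eq_bigr (fun e => (if a.1 e then p else 1 - p) * (a.1 e ==> delta a.2 e)%:R));
  last by move=> e _; rewrite /edge_factor; case: (a.1 e); rewrite ?mulr1.
rewrite big_split /= prod_indicator /jump_weight; congr (_ * _).
rewrite (bigID (fun e => a.1 e)) /= mulrC; congr (_ * _).
  rewrite (eq_bigr (fun _ => 1 - p)) => [|e /andP[_ /negbTE ->] //].
  by rewrite -prodr_const; apply: eq_bigl => e; rewrite inE.
rewrite (eq_bigr (fun _ => p)) => [|e /andP[_ ->] //].
by rewrite -prodr_const; apply: eq_bigl => e; rewrite inE.
Qed.

Lemma IPweight_split x (a : state) :
  IPweight p a = \prod_(e | ~~ inEx x e) edge_factor a e * jump_weight p x a.
Proof. by rewrite /IPweight (bigID (inEx x)) /= mulrC -prod_star_edge_factor. Qed.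

Lemma IP_reversible : reversible (@IP R V adj p) (@joint_rate R V adj p).
Proof.
move=> a b; have [x jx|nojump] := pickP (fun x => jump_at x a b); last first.
  rewrite !joint_rate_nojump ?mulr0 // => x; last by rewrite nojump.
  by apply: contraFN (nojump x); apply: jump_at_sym.
rewrite (joint_rate_jump jx) (joint_rate_jump (jump_at_sym jx)) /IP !(IPweight_split x).
have -> : \prod_(e | ~~ inEx x e) edge_factor a e = \prod_(e | ~~ inEx x e) edge_factor b e.
  apply: eq_bigr => e xe; move: jx => /andP[/eqP b2 /forallP off].
  by rewrite /edge_factor (eqP (implyP (off e) xe)) b2 delta_flip_notin.
ring.
Qed.

Lemma sum_spin_fiber (F : state -> R) (s : scfg V) :
  \sum_(a | a.2 == s) F a = \sum_(eta : ecfg adj) F (eta, s).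
Proof.
rewrite (eq_bigr (fun a => F (a.1, a.2))) => [|[] //].
rewrite -(pair_big_dep xpredT (fun _ s' => s' == s) (fun eta s' => F (eta, s'))) /=.
by apply: eq_bigr => eta _; rewrite big_pred1_eq.
Qed.

Lemma joint_rate_flip (eta eta' : ecfg adj) s x :
  joint_rate p (eta, s) (eta', flip s x)
  = \prod_e (if inEx x e then edge_factor (eta', flip s x) e else (eta' e == eta e)%:R).
Proof.
rewrite (bigID (inEx x)) /=.
rewrite (eq_bigr (edge_factor (eta', flip s x))) => [|e ->//].
rewrite (eq_bigr (fun e => (eta' e == eta e)%:R) (P := fun e => ~~ inEx x e)) => [|e /negbTE ->//].
rewrite prod_star_edge_factor prod_indicator mulrC.
have [off|] := boolP [forall e, ~~ inEx x e ==> (eta' e == eta e)].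
  by rewrite mul1r; apply: joint_rate_jump; rewrite /jump_at eqxx.
move=> noff; rewrite mul0r; apply: joint_rate_nojump => y; apply: contra noff.
by move=> /andP[/eqP /flip_inj <-].
Qed.

Lemma sum_spin_fiber_joint_rate (a : state) (t : scfg V) :
  \sum_(b | b.2 == t) joint_rate p a b = glauber_rate adj p a.2 t.
Proof.
case: a => eta s /=; rewrite /glauber_rate; case: pickP => [x /eqP -> | noflip]; last first.
  rewrite big1 // => b /eqP b2; apply: joint_rate_nojump => x.
  by apply/negP => /andP[/eqP flipx _]; move: (noflip x); rewrite -b2 flipx eqxx.
rewrite sum_spin_fiber; under eq_bigr do rewrite joint_rate_flip.
pose G e (v : bool) : R :=
  if inEx x e then (if v then p * (delta (flip s x) e)%:R else 1 - p) else (v == eta e)%:R.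
rewrite -(bigA_distr_bigA G).
rewrite (eq_bigr (fun e => if inEx x e && delta s e then 1 - p else 1)) => [|e _].
  by rewrite -big_mkcond -prodr_const; apply: eq_bigl => e; rewrite inE.
rewrite big_bool /G; case: (boolP (inEx x e)) => xe /=.
  by rewrite delta_flip //; case: (delta s e); rewrite /= ?mulr0 ?add0r ?mulr1 ?subrKC.
by case: (eta e); rewrite /= ?addr0 ?add0r.
Qed.


(* The flipping endvertex would make the opened edge disagree, violating [inC]. *)
Lemma joint_rate_agreeing_edge (a b : state) e :
  delta a.2 e -> ~~ a.1 e -> b.1 e -> joint_rate p a b = 0.
Proof.
move=> agree closed opened; rewrite /joint_rate; case: pickP => // x /andP[/eqP b2 /forallP off].
have xe : inEx x e.
  by apply: contraT => xe; move: (implyP (off e) xe); rewrite opened (negbTE closed).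
rewrite /jump_weight (_ : inC x b = false) ?mulr0 //.
by apply/negbTE/forallP => /(_ e); rewrite xe opened b2 delta_flip // agree.
Qed.

Section Positivity.
Hypothesis hp : 0 < p < 1.

Lemma joint_rate_ge0 (a b : state) : 0 <= joint_rate p a b.
Proof.
have /andP[p0 p1] := hp; rewrite /joint_rate; case: pickP => // x _.
by rewrite /jump_weight !mulr_ge0 // exprn_ge0 // ?subr_ge0 ltW.
Qed.

Lemma joint_rate_gt0 {x} {a b : state} : jump_at x a b -> inC x b -> 0 < joint_rate p a b.
Proof.
move=> jx Cx; have /andP[p0 p1] := hp.
by rewrite (joint_rate_jump jx) /jump_weight Cx mulr1 mulr_gt0 ?exprn_gt0 ?subr_gt0.
Qed.

Lemma edge_marginal_not_MJP : (exists x y, adj x y) ->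
  ~ is_MJP (@joint_rate R V adj p) (fun a : state => a.1).
Proof.
move=> [x0 [y0 xy]] [c' [_ marg]].
have e0_edge : is_edge adj [set x0; y0].
  by apply/existsP; exists x0; apply/existsP; exists y0; rewrite xy eqxx.
pose e0 : edge adj := Sub _ e0_edge.
have x0e0 : inEx x0 e0 by rewrite /inEx /= !inE eqxx.
pose closed : ecfg adj := [ffun=> false].
pose only_e0 : ecfg adj := [ffun e => e == e0].
pose plus : scfg V := [ffun=> true].
have agree (e : edge adj) : delta plus e.
  by apply/forallP => u; apply/implyP => _; apply/forallP => v; rewrite !ffunE implybT.
have closed_ne : (closed == only_e0) = false.
  by apply/negbTE/eqP => /ffunP/(_ e0); rewrite !ffunE eqxx.
have := MJP_marginal_gen_fiber (closed, plus) (closed, flip plus x0) only_e0 marg erefl.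
rewrite !sum_gen_notin ?closed_ne // big1 => [|b /eqP b1]; last first.
  by apply: (joint_rate_agreeing_edge _ _ e0); rewrite ?b1 ?ffunE ?eqxx.
apply/eqP; rewrite eq_sym lt0r_neq0 //= (bigD1 (only_e0, plus)) //=.
apply: ltr_wpDr; first by apply: sumr_ge0 => b _; apply: joint_rate_ge0.
have jump : jump_at x0 (closed, flip plus x0) (only_e0, plus).
  apply/andP; split; first by rewrite /= flipK.
  apply/forallP => e; apply/implyP => xe; rewrite /= !ffunE.
  by rewrite eqbF_neg; apply: contraNN xe => /eqP ->.
have Cx0 : inC x0 (only_e0, plus) by apply/forallP => e; rewrite agree !implybT.
exact: joint_rate_gt0 jump Cx0.
Qed.
End Positivity.
End Model.

Theorem theorem3 (R : realType) (V : finType) (adj : rel V)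
  (adj_sym : symmetric adj) (adj_irr : irreflexive adj)
  (hE : exists x y, adj x y) (p : R) (hp : 0 < p < 1) :
  reversible (@IP R V adj p) (@joint_rate R V adj p)
  /\ MJP_marginal (@joint_rate R V adj p) (fun a : state adj => a.2)
                  (@glauber_rate R V adj p)
  /\ ~ is_MJP (@joint_rate R V adj p) (fun a : state adj => a.1).
Proof.
split; first exact: IP_reversible.
split; last exact: edge_marginal_not_MJP.
by apply: lumpable_MJP_marginal => a t _; apply: sum_spin_fiber_joint_rate.
Qed.
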